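(* Let $Q$ be a Jordan loop and $x\in Q$ such that $x^3x^3=x^6$. Then (i) $x^6$ is well-defined; (ii) $x^7$ is well-defined; (iii) $x^6x^{-1}=x^5$; (iv) $x^8$ is well-defined.
   Context: A loop is a set $Q$ with a binary operation (juxtaposition) and neutral element $e$ such that for all $a,b$ the equations $ax=b$, $ya=b$ have unique solutions. A Jordan loop is a commutative loop satisfying $x^2(yx)=(x^2y)x$. For $k\ge 0$, $x^k$ denotes the right-associated product $x(x(\cdots(xe)\cdots))$ with $k$ factors $x$. We say $x^k$ is well-defined if every bracketing of a product of $k$ copies of $x$ gives the same value. $x^{-1}$ denotes the (two-sided) inverse of $x$. *)

Definition is_loop {Q : Type} (op : Q -> Q -> Q) (e : Q) : Prop :=
  (forall x, op e x = x /\ op x e = x) /\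
  (forall a b, exists! x, op a x = b) /\
  (forall a b, exists! y, op y a = b).

Fixpoint xpow {Q : Type} (op : Q -> Q -> Q) (e : Q) (k : nat) (x : Q) : Q :=
  match k with
  | O => e
  | S k' => op x (xpow op e k' x)
  end.

Definition is_jordan_loop {Q : Type} (op : Q -> Q -> Q) (e : Q) : Prop :=
  is_loop op e /\
  (forall x y, op x y = op y x) /\
  (forall x y, op (xpow op e 2 x) (op y x) = op (op (xpow op e 2 x) y) x).

Inductive bracketing : Type :=
  | bleaf : bracketing
  | bnode : bracketing -> bracketing -> bracketing.

Fixpoint nleaves (t : bracketing) : nat :=
  match t with
  | bleaf => 1
  | bnode l r => nleaves l + nleaves r
  end.

Fixpoint beval {Q : Type} (op : Q -> Q -> Q) (x : Q) (t : bracketing) : Q :=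
  match t with
  | bleaf => x
  | bnode l r => op (beval op x l) (beval op x r)
  end.

(* x^k is well-defined: every bracketing of a product of k copies of x
   gives the same value (namely the right-associated one, x^k). *)
Definition pow_well_defined {Q : Type} (op : Q -> Q -> Q) (e : Q) (k : nat) (x : Q) : Prop :=
  forall t : bracketing, nleaves t = k -> beval op x t = xpow op e k x.

From Stdlib Require Import PeanoNat Lia.

(* The Jordan law says that left multiplication by [a] commutes with left
   multiplication by [a^2].  Hence [a^2 a^n = a^(n+2)], and applying the law to
   [a^2] also [a^4 a^n = a^(n+4)].  Among the products [x^l x^r] with
   [l + r <= 8] this leaves only [x^3 x^3], which is the hypothesis, and
   [x^3 x^5].  With [u] the inverse of [x], the same commutations at [u], [u^2]
   and, thanks to [x^3 x^3 = x^6], at [x^3] give by cancellation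
   [x^6 u^2 = x^4], [x^6 u^4 = x^2] and then [x^6 u = x^3 x^2 = x^5]; the law at
   [x^3] applied to [u] finally gives [x^3 x^5 = x^6 x^2 = x^8]. *)

Section WellDefinedPowers.

Variables (Q : Type) (op : Q -> Q -> Q) (e x : Q).
Hypothesis mulx1 : op x e = x.

Lemma nleaves_pos (t : bracketing) : 1 <= nleaves t.
Proof. induction t; simpl; lia. Qed.

Lemma pow_well_defined_of_mul_pow (N : nat) :
  (forall l r, 1 <= l -> 1 <= r -> l + r <= N ->
     op (xpow op e l x) (xpow op e r x) = xpow op e (l + r) x) ->
  pow_well_defined op e N x.
Proof.
  intros mul_pow t <-.
  enough (H : forall t', nleaves t' <= nleaves t ->
            beval op x t' = xpow op e (nleaves t') x) by (apply H; lia).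
  induction t' as [|l IHl r IHr]; simpl; intros Hle.
  - now rewrite mulx1.
  - pose proof (nleaves_pos l); pose proof (nleaves_pos r).
    rewrite IHl, IHr by lia. apply mul_pow; lia.
Qed.

End WellDefinedPowers.

Section JordanLoop.

Variables (Q : Type) (op : Q -> Q -> Q) (e : Q).
Local Infix "*" := op.
Local Notation "a ^ n" := (xpow op e n a).

Hypothesis mulC : forall a b, a * b = b * a.
Hypothesis mul1 : forall a, a * e = a.
Hypothesis mulI : forall a b c, a * b = a * c -> b = c.
Hypothesis jordan : forall a y, a ^ 2 * (a * y) = a * (a ^ 2 * y).

Lemma pow1 a : a ^ 1 = a.
Proof. exact (mul1 a). Qed.

Lemma sq_mul_pow a n : a ^ 2 * a ^ n = a ^ (2 + n).
Proof.
  induction n as [|n IHn].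
  - apply mul1.
  - change (a ^ 2 * (a * a ^ n) = a * a ^ (2 + n)).
    now rewrite jordan, IHn.
Qed.

Lemma pow2_sq a : (a ^ 2) ^ 2 = a ^ 4.
Proof. change ((a ^ 2) * ((a ^ 2) * e) = a ^ 4). rewrite mul1. apply sq_mul_pow. Qed.

Lemma jordan_pow2 a y : a ^ 4 * (a ^ 2 * y) = a ^ 2 * (a ^ 4 * y).
Proof. rewrite <- pow2_sq. apply jordan. Qed.

Lemma pow4_mul_pow a n : a ^ 4 * a ^ n = a ^ (4 + n).
Proof.
  enough (H : a ^ 4 * a ^ n = a ^ (4 + n) /\ a ^ 4 * a ^ S n = a ^ (4 + S n))
    by apply H.
  induction n as [|n [IHn IHSn]]; split.
  - apply mul1.
  - now rewrite pow1, mulC.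
  - exact IHSn.
  - replace (4 + S (S n)) with (2 + (4 + n)) by lia.
    change (a ^ 4 * a ^ (2 + n) = a ^ (2 + (4 + n))).
    now rewrite <- !sq_mul_pow, jordan_pow2, IHn.
Qed.

Lemma pow2_mul_inv a b : a * b = e -> a ^ 2 * b = a.
Proof.
  intros ab. apply (mulI a).
  rewrite <- jordan, ab, mul1.
  change (a * (a * e) = a * a). now rewrite mul1.
Qed.

Lemma pow2_mul_pow2_inv a b : a * b = e -> a ^ 2 * b ^ 2 = e.
Proof.
  intros ab. assert (ba : b * a = e) by now rewrite mulC.
  apply (mulI b).
  rewrite mul1, (mulC (a ^ 2)), <- jordan, (mulC b (a ^ 2)), (pow2_mul_inv a b ab).
  now apply pow2_mul_inv.
Qed.

Lemma pow4_mul_inv a b : a * b = e -> a ^ 4 * b = a ^ 3.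
Proof.
  intros ab. apply (mulI (a ^ 2)).
  rewrite <- jordan_pow2, pow2_mul_inv, sq_mul_pow by exact ab.
  change (a ^ 4 * a = a ^ (4 + 1)).
  now rewrite <- pow4_mul_pow, pow1.
Qed.

Lemma pow4_mul_pow2_inv a b : a * b = e -> a ^ 4 * b ^ 2 = a ^ 2.
Proof.
  intros ab. rewrite <- pow2_sq.
  now apply pow2_mul_inv, pow2_mul_pow2_inv.
Qed.

Lemma pow4_mul_pow4_inv a b : a * b = e -> a ^ 4 * b ^ 4 = e.
Proof.
  intros ab. rewrite <- !pow2_sq.
  now apply pow2_mul_pow2_inv, pow2_mul_pow2_inv.
Qed.

Lemma pow3_mul_pow2_inv a b : a * b = e -> a ^ 3 * b ^ 2 = a.
Proof.
  intros ab. assert (ba : b * a = e) by now rewrite mulC.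
  rewrite mulC, <- (pow4_mul_inv a b), (mulC _ b), jordan by exact ab.
  rewrite (mulC (b ^ 2)), pow4_mul_pow2_inv, (mulC b) by exact ab.
  now apply pow2_mul_inv.
Qed.

Lemma pow3_mul_inv a b : a * b = e -> a ^ 3 * b = a ^ 2.
Proof.
  intros ab. apply (mulI (b ^ 2)).
  rewrite (mulC (a ^ 3)), jordan, (mulC (b ^ 2) (a ^ 3)), pow3_mul_pow2_inv
    by exact ab.
  rewrite (mulC (b ^ 2) (a ^ 2)), pow2_mul_pow2_inv by exact ab.
  now rewrite mulC.
Qed.

Lemma pow3_mul_pow4_inv a b : a * b = e -> a ^ 3 * b ^ 4 = b.
Proof.
  intros ab. assert (ba : b * a = e) by now rewrite mulC.
  apply (mulI (b ^ 2)).
  rewrite (mulC (a ^ 3)), <- jordan_pow2, (mulC (b ^ 2)), pow3_mul_pow2_inv,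
    pow4_mul_inv by assumption.
  change (b ^ (2 + 1) = b ^ 2 * b).
  now rewrite <- sq_mul_pow, pow1.
Qed.

Section CubeSquare.

Variables x u : Q.
Hypothesis cube_sq : x ^ 3 * x ^ 3 = x ^ 6.
Hypothesis mul_inv : x * u = e.

Lemma jordan_pow3 y : x ^ 6 * (x ^ 3 * y) = x ^ 3 * (x ^ 6 * y).
Proof.
  pose proof (jordan (x ^ 3) y) as J.
  change ((x ^ 3) ^ 2) with (x ^ 3 * (x ^ 3 * e)) in J.
  now rewrite mul1, cube_sq in J.
Qed.

Lemma pow6_mul_pow2_inv : x ^ 6 * u ^ 2 = x ^ 4.
Proof.
  apply (mulI (x ^ 3)).
  rewrite <- jordan_pow3, pow3_mul_pow2_inv by exact mul_inv.
  rewrite (mulC (x ^ 3)), pow4_mul_pow.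
  apply mulC.
Qed.

Lemma pow6_mul_pow4_inv : x ^ 6 * u ^ 4 = x ^ 2.
Proof.
  apply (mulI (u ^ 2)).
  rewrite (mulC (x ^ 6)), <- jordan_pow2, (mulC (u ^ 2)), pow6_mul_pow2_inv.
  rewrite (mulC (u ^ 4)), pow4_mul_pow4_inv by exact mul_inv.
  rewrite mulC. symmetry. now apply pow2_mul_pow2_inv.
Qed.

Lemma pow6_mul_inv : x ^ 6 * u = x ^ 5.
Proof.
  pose proof (jordan_pow3 (u ^ 4)) as J.
  rewrite pow3_mul_pow4_inv, pow6_mul_pow4_inv in J by exact mul_inv.
  rewrite J, mulC. apply sq_mul_pow.
Qed.

Lemma pow3_mul_pow5 : x ^ 3 * x ^ 5 = x ^ 8.
Proof.
  pose proof (jordan_pow3 u) as J.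
  rewrite pow3_mul_inv, pow6_mul_inv in J by exact mul_inv.
  rewrite <- J, mulC. apply sq_mul_pow.
Qed.

Lemma pow_mul_pow_le8 l r : 1 <= l -> 1 <= r -> l + r <= 8 ->
  x ^ l * x ^ r = x ^ (l + r).
Proof.
  revert l r.
  enough (H : forall l r, 1 <= l <= r -> l + r <= 8 -> x ^ l * x ^ r = x ^ (l + r)).
  { intros l r Hl Hr Hlr. destruct (Nat.le_gt_cases l r).
    - apply H; lia.
    - rewrite mulC, Nat.add_comm. apply H; lia. }
  intros l r Hlr H8.
  destruct l as [|[|[|[|[|l]]]]]; try lia.
  - now rewrite pow1.
  - apply sq_mul_pow.
  - destruct r as [|[|[|[|[|[|r]]]]]]; try lia.
    + exact cube_sq.
    + rewrite mulC. apply pow4_mul_pow.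
    + exact pow3_mul_pow5.
  - replace r with 4 by lia. apply pow4_mul_pow.
Qed.

End CubeSquare.

End JordanLoop.

Lemma loop_mulI {Q : Type} {op : Q -> Q -> Q} {e : Q} :
  is_loop op e -> forall a b c, op a b = op a c -> b = c.
Proof.
  intros [_ [solve_l _]] a b c H.
  destruct (solve_l a (op a b)) as [z [_ z_uniq]].
  rewrite <- (z_uniq b eq_refl). apply z_uniq. now symmetry.
Qed.

Theorem theorem2p8 (Q : Type) (op : Q -> Q -> Q) (e : Q) (x : Q)
  (HQ : is_jordan_loop op e)
  (H3 : op (xpow op e 3 x) (xpow op e 3 x) = xpow op e 6 x) :
  pow_well_defined op e 6 x /\
  pow_well_defined op e 7 x /\
  (forall xinv : Q, op x xinv = e -> op xinv x = e ->
     op (xpow op e 6 x) xinv = xpow op e 5 x) /\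
  pow_well_defined op e 8 x.
Proof.
  destruct HQ as [Hloop [mulC jordan_r]].
  pose proof (loop_mulI Hloop) as mulI.
  assert (mul1 : forall a, op a e = a) by apply Hloop.
  assert (jordan : forall a y, op (xpow op e 2 a) (op a y)
                               = op a (op (xpow op e 2 a) y)).
  { intros a y. now rewrite (mulC a y), jordan_r, mulC. }
  destruct (proj1 (proj2 Hloop) x e) as [u [mul_inv _]].
  pose proof (pow_mul_pow_le8 _ _ _ mulC mul1 mulI jordan x u H3 mul_inv) as mul_pow.
  assert (well_defined : forall N, N <= 8 -> pow_well_defined op e N x).
  { intros N HN. apply pow_well_defined_of_mul_pow; [apply mul1|].
    intros l r Hl Hr HlrN. apply mul_pow; lia. }
  repeat split; try (apply well_defined; lia).
  intros xinv Hxinv _.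
  rewrite (mulI x xinv u) by congruence.
  exact (pow6_mul_inv _ _ _ mulC mul1 mulI jordan x u H3 mul_inv).
Qed.
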